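(* For every $\varepsilon>0$ there exists a connected graph $G=(V,E)$ such that the generic submodularity ratio $\gamma$ of the set function $g:2^V\to\mathbb{R}_{\ge 0}$, $g(\emptyset)=0$, $g(S)=1/f(S)$ for $S\ne\emptyset$, satisfies $\gamma<\varepsilon$. (The same holds for any positive constant multiple of $g$.)
   Context: Graphs are finite, undirected, unweighted, without self-loops, connected; $f(S)=\sum_{u\in V}\min_{s\in S}\mathrm{dist}(u,s)$ is the group farness. For a set function $g$ on $2^U$, the marginal gain is $\Delta(e\mid A)=g(A\cup\{e\})-g(A)$. For a non-negative monotone set function $g$, its generic submodularity ratio $\gamma\in[0,1]$ is the largest scalar such that $\Delta(e\mid A)\ge\gamma\,\Delta(e\mid B)$ for all $A\subseteq B\subseteq U$ and all $e\in U\setminus B$; $\gamma=1$ iff $g$ is submodular. *)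

From HB Require Import structures.
From mathcomp Require Import all_boot all_order all_algebra.
From mathcomp Require Import all_reals.
Set Implicit Arguments. Unset Strict Implicit. Unset Printing Implicit Defensive.
Import Order.TTheory GRing.Theory Num.Theory.

Section Graphs.
Variables (T : finType) (adj : rel T).

Definition simple_graph := symmetric adj /\ irreflexive adj.
Definition connected_graph := forall x y : T, connect adj x y.

Fixpoint walk_n (n : nat) (x y : T) : bool :=
  if n is n'.+1 then [exists z, adj x z && walk_n n' z y] else x == y.

(* shortest-path distance: least n with a walk of length n
   (returns #|T| if y is unreachable, which never happens in a connected graph) *)
Definition dist (x y : T) : nat := find (fun n => walk_n n x y) (iota 0 #|T|).

(* group farness f(S) = sum_u min_{s in S} dist(u,s) (meaningful for S nonempty) *)
Definition farness (S : {set T}) : nat :=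
  \sum_(u : T) \big[minn/#|T|]_(s in S) dist u s.

End Graphs.

Section Ratio.
Variables (R : realType) (U : finType).
Local Open Scope ring_scope.

Definition inv_farness (adj : rel U) (S : {set U}) : R :=
  if S == set0 then 0 else ((farness adj S)%:R)^-1.

Definition marg_gain (g : {set U} -> R) (e : U) (A : {set U}) : R :=
  g (e |: A) - g A.

(* gam satisfies the submodularity-ratio inequality for all A ⊆ B, e ∉ B.
   Only triples with B ∪ {e} ≠ U are considered: g(U) = 1/f(U) = 1/0 is
   undefined. *)
Definition ratio_ok (g : {set U} -> R) (gam : R) : Prop :=
  forall (A B : {set U}) (e : U),
    A \subset B -> e \notin B -> e |: B != setT ->
    gam * marg_gain g e B <= marg_gain g e A.

Definition is_subm_ratio (g : {set U} -> R) (gam : R) : Prop :=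
  [/\ 0 <= gam <= 1, ratio_ok g gam &
      forall gam', 0 <= gam' <= 1 -> ratio_ok g gam' -> gam' <= gam].

End Ratio.

(** In the complete graph on [n] vertices every vertex outside [S] is at
    distance one from [S], so [f(S) = n - |S|] and [g(S) = 1/(n - |S|)].
    Adding a vertex to the empty set gains only [1/(n-1)], whereas adding it
    to a set of [n - 2] vertices gains [1 - 1/2 = 1/2].  Hence
    [gamma <= 2/(n-1)], which is below any [eps > 0] for [n] large; scaling
    [g] by [c > 0] scales every marginal gain and leaves the ratio unchanged. *)
From HB Require Import structures.
From mathcomp Require Import all_boot all_order all_algebra.
From mathcomp Require Import all_reals.
From mathcomp Require Import ring.
Set Implicit Arguments. Unset Strict Implicit. Unset Printing Implicit Defensive.
Import Order.TTheory GRing.Theory Num.Theory.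
Local Open Scope ring_scope.

Section SubmodularityRatio.
Variables (R : realType) (U : finType) (g : {set U} -> R).

Definition admissible_triple (t : {set U} * {set U} * U) : bool :=
  [&& t.1.1 \subset t.1.2, t.2 \notin t.1.2 & t.2 |: t.1.2 != setT].

Hypothesis marg_gain_gt0 :
  forall (X : {set U}) (e : U), e \notin X -> e |: X != setT -> 0 < marg_gain g e X.

Lemma marg_gain_sub_gt0 (A B : {set U}) (e : U) :
  A \subset B -> e \notin B -> e |: B != setT -> 0 < marg_gain g e A.
Proof.
move=> sAB eB eBT; apply: marg_gain_gt0.
  by apply: contra eB; apply: (subsetP sAB).
apply: contraNneq eBT => eAT; rewrite -subTset -eAT.
by apply: setUS.
Qed.

Definition gain_ratio (t : {set U} * {set U} * U) : R :=
  marg_gain g t.2 t.1.1 / marg_gain g t.2 t.1.2.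

Lemma ratio_ok_gain_ratio (gam : R) :
  ratio_ok g gam <-> forall t, admissible_triple t -> gam <= gain_ratio t.
Proof.
split=> [ok [[A B] e] /and3P[/= sAB eB eBT] | le_gam A B e sAB eB eBT].
  by rewrite ler_pdivlMr ?marg_gain_gt0 //; apply: ok.
by rewrite -ler_pdivlMr ?marg_gain_gt0 //; apply: (le_gam (A, B, e)); apply/and3P.
Qed.

(* The witness is the infimum of all gain ratios, capped at 1. *)
Lemma subm_ratio_le_gain_ratio (A B : {set U}) (e : U) :
  A \subset B -> e \notin B -> e |: B != setT ->
  exists gam, is_subm_ratio g gam /\ gam <= marg_gain g e A / marg_gain g e B.
Proof.
move=> sAB eB eBT.
pose gam := \big[Order.min/1]_(t | admissible_triple t) gain_ratio t.
have gam_le t : admissible_triple t -> gam <= gain_ratio t.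
  exact: bigmin_le_cond.
have gam_ok : ratio_ok g gam by apply/ratio_ok_gain_ratio.
exists gam; split; last by apply: (gam_le (A, B, e)); apply/and3P.
split=> [||gam' /andP[_ gam'_le1] /ratio_ok_gain_ratio gam'_le].
- rewrite bigmin_le_id andbT; apply: le_bigmin => // -[[A' B'] e'].
  move=> /and3P[/= sAB' eB' eBT']; rewrite /gain_ratio /=.
  apply: divr_ge0; apply: ltW.
    exact: (marg_gain_sub_gt0 sAB' eB' eBT').
  exact: marg_gain_gt0.
- exact: gam_ok.
- exact: le_bigmin.
Qed.

End SubmodularityRatio.

Lemma marg_gainZ (R : realType) (U : finType) (g : {set U} -> R) (c : R) e X :
  marg_gain (fun S => c * g S) e X = c * marg_gain g e X.
Proof. by rewrite /marg_gain mulrBr. Qed.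

Section CompleteGraph.
Variable T : finType.

Definition complete_adj : rel T := fun x y => x != y.

Lemma complete_simple : simple_graph complete_adj.
Proof. by split=> [x y | x]; rewrite /complete_adj ?eqxx // eq_sym. Qed.

Lemma complete_connected : connected_graph complete_adj.
Proof. by move=> x y; case: (eqVneq x y) => [->|xy]; [apply: connect0 | apply: connect1]. Qed.

Lemma dist_complete (x y : T) : dist complete_adj x y = (x != y).
Proof.
have T_gt0 : (0 < #|T|)%N by apply/card_gt0P; exists x.
rewrite /dist; case: (eqVneq x y) => [->|xy] /=.
  by case: #|T| T_gt0 => //= n _; rewrite eqxx.
have T_gt1 : (1 < #|T|)%N.
  by rewrite (cardD1 x) (cardD1 y) !inE eq_sym xy.
case: #|T| T_gt1 => [|[|n]] //= _.
rewrite (negbTE xy) /=; case: existsP => // -[].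
by exists y; rewrite /complete_adj xy eqxx.
Qed.

Lemma farness_complete (S : {set T}) : S != set0 -> farness complete_adj S = #|~: S|.
Proof.
case/set0Pn=> s0 s0S; rewrite /farness -sum1_card [RHS]big_mkcond /=.
apply: eq_bigr => u _; rewrite in_setC.
under eq_bigr => s _ do rewrite dist_complete.
have T_gt0 : (0 < #|T|)%N by apply/card_gt0P; exists u.
case: (boolP (u \in S)) => uS /=; apply/anti_leq/andP; split.
- by apply: (@bigmin_inf _ nat T #|T| u (fun s => s \in S)); rewrite ?eqxx.
- exact: leq0n.
- by apply: (@bigmin_inf _ nat T #|T| s0 (fun s => s \in S)) => //; case: (_ != _).
- apply: (@le_bigmin _ nat T _ _ _ 1 (fun s => s \in S)) => // s sS.
  by case: (eqVneq u s) uS => // ->; rewrite sS.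
Qed.

Variable R : realType.

Lemma inv_farness_complete (S : {set T}) :
  S != set0 -> inv_farness R complete_adj S = (#|~: S|%:R)^-1.
Proof. by move=> S0; rewrite /inv_farness (negbTE S0) farness_complete. Qed.

Lemma marg_gain_complete_gt0 (X : {set T}) (e : T) :
  e \notin X -> e |: X != setT -> 0 < marg_gain (inv_farness R complete_adj) e X.
Proof.
move=> eX eXT; rewrite /marg_gain subr_gt0.
have eX0 : e |: X != set0 by apply/set0Pn; exists e; rewrite setU11.
have C_gt0 : (0 < #|~: (e |: X)|)%N.
  by rewrite card_gt0; apply: contraNneq eXT => C0; rewrite -[e |: X]setCK C0 setC0.
have C_lt : (#|~: (e |: X)| < #|~: X|)%N.
  by apply: proper_card; rewrite properC properUr // sub1set.
rewrite (inv_farness_complete eX0); case: (eqVneq X set0) => [X0|X0].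
  by rewrite /inv_farness X0 eqxx invr_gt0 ltr0n -X0.
by rewrite inv_farness_complete // ltf_pV2 ?posrE ?ltr0n ?ltr_nat // (ltn_trans C_gt0).
Qed.

Lemma gain_ratio_complete (e0 e1 : T) : e0 != e1 -> (2 < #|T|)%N ->
  marg_gain (inv_farness R complete_adj) e0 set0 /
  marg_gain (inv_farness R complete_adj) e0 (~: [set e0; e1]) = 2 / (#|T|.-1)%:R.
Proof.
move=> e01 T_gt2; set g := inv_farness R complete_adj; set B := ~: [set e0; e1].
have B0 : B != set0.
  by rewrite -card_gt0 cardsCs setCK cards2 e01 subn_gt0.
have e0S (S : {set T}) : e0 |: S != set0 by apply/set0Pn; exists e0; rewrite setU11.
have CeB : ~: (e0 |: B) = [set e1].
  apply/setP=> x; rewrite !inE negb_or negbK.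
  by case: (eqVneq x e0) => [->|]; rewrite ?(negbTE e01).
rewrite /marg_gain [g set0]/g /inv_farness eqxx subr0 /g !inv_farness_complete //.
rewrite CeB setCK cards2 e01 /= cards1 setU0 cardsC1 invr1.
have T_gt1 : (#|T|.-1)%:R != 0 :> R by rewrite pnatr_eq0 -lt0n -ltnS prednK ?(ltn_trans _ T_gt2).
by field; rewrite T_gt1.
Qed.

End CompleteGraph.

Theorem mainTheorem5 (R : realType) (eps : R) (heps : 0 < eps) :
  exists (V : finType) (adj : rel V),
    [/\ simple_graph adj, connected_graph adj,
        (exists gam : R, is_subm_ratio (inv_farness R adj) gam /\ gam < eps) &
        (forall c : R, 0 < c ->
           exists gam : R,
             is_subm_ratio (fun S => c * inv_farness R adj S) gam /\ gam < eps)].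
Proof.
pose k := Num.truncn (2 / eps).
pose e0 : 'I_k.+3 := ord0; pose e1 : 'I_k.+3 := ord_max.
pose B := ~: [set e0; e1].
pose g := inv_farness R (@complete_adj 'I_k.+3).
have small_ratio : marg_gain g e0 set0 / marg_gain g e0 B < eps.
  rewrite gain_ratio_complete ?card_ord // succnK ltr_pdivrMr // -ltr_pdivrMl //.
  by rewrite mulrC (lt_trans (truncnS_gt _)) // ltr_nat.
have [sB e0B e0BT] : [/\ set0 \subset B, e0 \notin B & e0 |: B != setT].
  split; rewrite ?sub0set ?inE ?eqxx //.
  by apply/eqP=> /setP/(_ e1); rewrite !inE eqxx.
have subm_ratio_lt (h : {set 'I_k.+3} -> R) :
    (forall (X : {set 'I_k.+3}) e, e \notin X -> e |: X != setT -> 0 < marg_gain h e X) ->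
    marg_gain h e0 set0 / marg_gain h e0 B = marg_gain g e0 set0 / marg_gain g e0 B ->
    exists gam, is_subm_ratio h gam /\ gam < eps.
  move=> h_gt0 h_ratio.
  have [gam [h_gam le_gam]] := subm_ratio_le_gain_ratio h_gt0 sB e0B e0BT.
  by exists gam; split=> //; rewrite h_ratio in le_gam; apply: le_lt_trans small_ratio.
exists 'I_k.+3, (@complete_adj 'I_k.+3); split.
- exact: complete_simple.
- exact: complete_connected.
- exact: subm_ratio_lt (@marg_gain_complete_gt0 _ R) erefl.
- move=> c c_gt0; apply: subm_ratio_lt => [X e eX eXT|].
    by rewrite marg_gainZ mulr_gt0 ?marg_gain_complete_gt0.
  by rewrite !marg_gainZ -mulf_div divff ?mul1r ?gt_eqF.
Qed.
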